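(* Let $n\ge1$, $R_0,R_1\in SO(n)$ and $h>0$. For each $t\in[0,h]$ let $A(t)=\frac{h-t}{h}R_0+\frac{t}{h}R_1$, and assume $A(t)$ is nonsingular for all $t\in[0,h]$. Let $A(t)=Q(t)Y(t)$ be the polar decomposition of $A(t)$, with $Q(t)$ orthogonal and $Y(t)$ symmetric positive definite. Then for $t\in[0,h]$, \[\dot Y(t)=Y(t)\,\mathrm{sym}\big(A(t)^{-1}\dot A(t)\big),\qquad \dot Q(t)=Q(t)\,\mathrm{skew}\big(A(t)^{-1}\dot A(t)\big).\]
   Context: $SO(n)=\{Q\in\mathbb{R}^{n\times n}:Q^TQ=I,\ \det Q>0\}$. For a square matrix $B$, $\mathrm{sym}(B)=\frac12(B+B^T)$ and $\mathrm{skew}(B)=\frac12(B-B^T)$. Overdots denote derivatives with respect to $t$. *)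

From HB Require Import structures.
From mathcomp Require Import all_boot all_order all_algebra.
From mathcomp Require Import all_classical all_reals all_analysis.
Set Implicit Arguments. Unset Strict Implicit. Unset Printing Implicit Defensive.
Import Order.TTheory GRing.Theory Num.Theory.
Import numFieldNormedType.Exports.
Local Open Scope classical_set_scope.
Local Open Scope ring_scope.

Definition orthogonal_mx (R : realType) (n : nat) (Q : 'M[R]_n) : Prop :=
  Q^T *m Q = 1%:M.

Definition SOmx (R : realType) (n : nat) (Q : 'M[R]_n) : Prop :=
  orthogonal_mx Q /\ 0 < \det Q.

Definition spd_mx (R : realType) (n : nat) (Y : 'M[R]_n) : Prop :=
  Y^T = Y /\ forall v : 'cV[R]_n, v != 0 -> 0 < (v^T *m Y *m v) 0 0.

Definition sym_mx (R : realType) (n : nat) (B : 'M[R]_n) : 'M[R]_n :=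
  2^-1 *: (B + B^T).
Definition skew_mx (R : realType) (n : nat) (B : 'M[R]_n) : 'M[R]_n :=
  2^-1 *: (B - B^T).

Definition is_deriv_within (R : realType) (V : normedModType R)
    (a b : R) (f : R -> V) (t : R) (df : V) : Prop :=
  (fun s : R => s^-1 *: (f (t + s) - f t))
    @ within [set s : R | s != 0 /\ a <= t + s <= b] (nbhs (0:R)) --> df.

From HB Require Import structures.
From mathcomp Require Import all_boot all_order all_algebra.
From mathcomp Require Import all_classical all_reals all_analysis.
From mathcomp Require Import ring lra.
Import Order.TTheory GRing.Theory Num.Theory.
Import numFieldNormedType.Exports.
Local Open Scope classical_set_scope.
Local Open Scope ring_scope.
Set Implicit Arguments. Unset Strict Implicit. Unset Printing Implicit Defensive.

(* Differentiating Y^2 = A^T A gives the Sylvester equation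
   Y Y' + Y' Y = A^T A' + A'^T A, which has at most one solution because Y is
   positive definite; quantitatively lam |F| <= n |Z F + F Y| whenever Y >= lam
   and Z >= 0.  On the chord between two rotations, A' = (R1 - R0)/h satisfies
   A' (A^T A) = (A A^T) A', so K = A^-1 A' commutes with A^T A = Y^2, hence with
   Y, and Y sym(K) solves the Sylvester equation.  Differentiating A = Q Y then
   gives Q' = (A' - Q Y') Y^-1 = Q skew(K).  Both derivatives are obtained from
   O(s) bounds on the difference quotients, each produced by the Sylvester
   estimate. *)

Section MatrixNorm.
Variable R : realType.

Lemma mx_norm_ge_entry m n (X : 'M[R]_(m, n)) i j : `|X i j| <= `|X|.
Proof.
rewrite [leRHS]/Num.Def.normr /= mx_normrE.
by apply/bigmax_geP; right => /=; exists (i, j).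
Qed.

Lemma mx_norm_le_entries m n (X : 'M[R]_(m, n)) c :
  0 <= c -> (forall i j, `|X i j| <= c) -> `|X| <= c.
Proof.
move=> c0 Xc; rewrite [leLHS]/Num.Def.normr /= mx_normrE.
by apply: bigmax_le => // -[i j] _; exact: Xc.
Qed.

Lemma mx_norm_mul m n p (X : 'M[R]_(m, n)) (Y : 'M[R]_(n, p)) :
  `|X *m Y| <= n%:R * `|X| * `|Y|.
Proof.
apply: mx_norm_le_entries => [|i j]; first by rewrite !mulr_ge0.
rewrite mxE (le_trans (ler_norm_sum _ _ _)) //.
apply: (@le_trans _ _ (\sum_(k < n) `|X| * `|Y|)).
  by apply: ler_sum => k _; rewrite normrM ler_pM // mx_norm_ge_entry.
by rewrite sumr_const card_ord -mulrA mulr_natl.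
Qed.

Lemma orthogonal_mx_norm_le1 n (Q : 'M[R]_n) : orthogonal_mx Q -> `|Q| <= 1.
Proof.
move=> QQ; apply: mx_norm_le_entries => // i j.
have /(congr1 (fun M : 'M[R]_n => M j j)) := QQ.
rewrite !mxE eqxx mulr1n => Qj1.
have : Q i j ^+ 2 <= 1.
  rewrite -Qj1 (bigD1 i) //= mxE -expr2 lerDl.
  by apply: sumr_ge0 => k _; rewrite mxE -expr2 sqr_ge0.
by move=> Q2; rewrite ler_norml; apply/andP; split; nra.
Qed.

Definition frob2 m n (X : 'M[R]_(m, n)) : R := \sum_i \sum_j X i j ^+ 2.

Lemma frob2_ge0 m n (X : 'M[R]_(m, n)) : 0 <= frob2 X.
Proof. by apply: sumr_ge0 => i _; apply: sumr_ge0 => j _; exact: sqr_ge0. Qed.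

Lemma sqr_mx_norm_le_frob2 m n (X : 'M[R]_(m, n)) : `|X| ^+ 2 <= frob2 X.
Proof.
have [->|/mx_norm_neq0 [[i j] /= Xij]] := eqVneq `|X| 0.
  by rewrite expr0n frob2_ge0.
have -> : `|X| = `|X i j| := Xij.
rewrite real_normK ?num_real // /frob2 (bigD1 i) //= (bigD1 j) //= -addrA lerDl.
rewrite addr_ge0 ?sumr_ge0 // => [k _|k _]; first exact: sqr_ge0.
by rewrite sumr_ge0 // => l _; exact: sqr_ge0.
Qed.

Lemma frob2_le_sqr_mx_norm m n (X : 'M[R]_(m, n)) :
  frob2 X <= (m * n)%:R * `|X| ^+ 2.
Proof.
apply: (@le_trans _ _ (\sum_(i < m) \sum_(j < n) `|X| ^+ 2)).
  apply: ler_sum => i _; apply: ler_sum => j _.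
  by rewrite -real_normK ?num_real // lerXn2r ?nnegrE ?mx_norm_ge_entry.
by rewrite !sumr_const !card_ord -mulrnA mulr_natl mulnC.
Qed.

End MatrixNorm.

Section QuadraticForm.
Variables (R : realType) (n : nat).
Implicit Types (Y Z W F G X : 'M[R]_n) (u v w : 'cV[R]_n).

Definition psd_mx Z := forall v, 0 <= (v^T *m Z *m v) 0 0.

Definition coercive_mx (lam : R) Y :=
  forall v, lam * (v^T *m v) 0 0 <= (v^T *m Y *m v) 0 0.

Lemma qformE Y v : (v^T *m Y *m v) 0 0 = \sum_i \sum_k v i 0 * Y i k * v k 0.
Proof.
rewrite !mxE; under eq_bigr do rewrite !mxE big_distrl /=.
rewrite exchange_big; apply: eq_bigr => i _; apply: eq_bigr => k _.
by rewrite !mxE.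
Qed.

Lemma sqnormE v : (v^T *m v) 0 0 = \sum_i v i 0 ^+ 2.
Proof. by rewrite !mxE; apply: eq_bigr => i _; rewrite !mxE expr2. Qed.

Lemma sqnorm_ge0 v : 0 <= (v^T *m v) 0 0.
Proof. by rewrite sqnormE sumr_ge0 // => i _; exact: sqr_ge0. Qed.

Lemma spd_mx_psd Y : spd_mx Y -> psd_mx Y.
Proof.
move=> [_ Ypos] v; have [->|v0] := eqVneq v 0; first by rewrite !mulmx0 mxE.
exact/ltW/Ypos.
Qed.

Lemma coercive_mx_psd lam Y : 0 <= lam -> coercive_mx lam Y -> psd_mx Y.
Proof. by move=> lam0 Ylam v; rewrite (le_trans _ (Ylam v)) ?mulr_ge0 ?sqnorm_ge0. Qed.

(* With <F, G> = sum_ij F_ij G_ij, pairing the equation with F gives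
   <F, G> = sum_j (col j F)^T Z (col j F) + sum_i (row i F) Y (row i F)^T
   >= lam frob2 F, while 2 lam <F, G> <= lam^2 frob2 F + frob2 G entrywise. *)
Lemma sylvester_frob2 Y Z F G lam :
  0 < lam -> Y^T = Y -> coercive_mx lam Y -> psd_mx Z ->
  Z *m F + F *m Y = G -> lam ^+ 2 * frob2 F <= frob2 G.
Proof.
move=> lam0 Ysym Ylam Zpsd FG.
pose S := \sum_i \sum_j F i j * G i j.
have SE : S = \sum_j ((col j F)^T *m Z *m col j F) 0 0
            + \sum_i (((row i F)^T)^T *m Y *m (row i F)^T) 0 0.
  rewrite /S -FG.
  under eq_bigr do under eq_bigr do rewrite !mxE mulrDr.
  under eq_bigr do rewrite big_split /=.
  rewrite big_split /=; congr (_ + _).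
    rewrite exchange_big; apply: eq_bigr => j _; rewrite qformE.
    apply: eq_bigr => i _; rewrite big_distrr; apply: eq_bigr => k _ /=.
    by rewrite !mxE mulrA.
  apply: eq_bigr => i _; rewrite qformE.
  apply: eq_bigr => j _; rewrite big_distrr; apply: eq_bigr => k _ /=.
  have -> : Y k j = Y j k by rewrite -{1}Ysym mxE.
  by rewrite !mxE; ring.
have lamFS : lam * frob2 F <= S.
  rewrite SE -[lam * _]add0r; apply: lerD; first exact: sumr_ge0.
  rewrite /frob2 mulr_sumr; apply: ler_sum => i _.
  apply: le_trans (Ylam _); rewrite sqnormE.
  by rewrite [in leRHS](eq_bigr (fun j => F i j ^+ 2)) // => j _; rewrite !mxE.
have SFG : 2 * lam * S <= lam ^+ 2 * frob2 F + frob2 G.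
  rewrite /S /frob2 !mulr_sumr -big_split; apply: ler_sum => i _ /=.
  rewrite !mulr_sumr -big_split; apply: ler_sum => j _ /=.
  have := sqr_ge0 (lam * F i j - G i j); nra.
nra.
Qed.

Lemma sylvester_mx_norm Y Z F G lam :
  0 < lam -> Y^T = Y -> coercive_mx lam Y -> psd_mx Z ->
  Z *m F + F *m Y = G -> `|F| <= n%:R / lam * `|G|.
Proof.
move=> lam0 Ysym Ylam Zpsd FG.
have : (lam * `|F|) ^+ 2 <= (n%:R * `|G|) ^+ 2.
  rewrite !exprMn (le_trans (ler_wpM2l _ (sqr_mx_norm_le_frob2 F))) ?sqr_ge0 //.
  rewrite (le_trans (sylvester_frob2 lam0 Ysym Ylam Zpsd FG)) //.
  by rewrite (le_trans (frob2_le_sqr_mx_norm G)) // natrM -expr2.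
rewrite ler_pXn2r ?nnegrE ?mulr_ge0 ?(ltW lam0) // => lamF.
by rewrite mulrAC ler_pdivlMr // mulrC.
Qed.

Lemma comm_mx_of_comm_sqr X Y lam :
  0 < lam -> Y^T = Y -> coercive_mx lam Y ->
  comm_mx X (Y *m Y) -> comm_mx X Y.
Proof.
move=> lam0 Ysym Ylam XYY.
set E := X *m Y - Y *m X.
have YE : Y *m E + E *m Y = 0.
  rewrite /E mulmxBr mulmxBl !mulmxA -[X *m Y *m Y]mulmxA XYY.
  by rewrite addrA subrK subrr.
have := sylvester_mx_norm lam0 Ysym Ylam (coercive_mx_psd (ltW lam0) Ylam) YE.
by rewrite normr0 mulr0 normr_le0 subr_eq0 => /eqP.
Qed.

Lemma qform_expand Y u w (x : R) : Y^T = Y ->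
  ((u + x *: w)^T *m Y *m (u + x *: w)) 0 0 =
  (u^T *m Y *m u) 0 0 + 2 * x * (u^T *m Y *m w) 0 0
  + x ^+ 2 * (w^T *m Y *m w) 0 0.
Proof.
move=> Ysym.
have wYu : w^T *m Y *m u = u^T *m Y *m w.
  rewrite -[in LHS](trmxK u) -{1}Ysym -!trmx_mul mulmxA.
  by apply/matrixP => i j; rewrite !ord1 mxE.
have -> : (u + x *: w)^T = u^T + x *: w^T by apply/matrixP => i j; rewrite !mxE.
rewrite !mulmxDr -!scalemxAr !mulmxDl -!scalemxAl wYu.
by rewrite !mxE; ring.
Qed.

Lemma qform_cauchy_schwarz Y u w : spd_mx Y ->
  ((u^T *m Y *m w) 0 0) ^+ 2 <= (u^T *m Y *m u) 0 0 * (w^T *m Y *m w) 0 0.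
Proof.
move=> Yspd; have [Ysym Ypos] := Yspd.
have [->|w0] := eqVneq w 0; first by rewrite !mulmx0 mxE expr0n mulr0.
have c0 := Ypos _ w0.
set a := (u^T *m Y *m u) 0 0; set b := (u^T *m Y *m w) 0 0.
set c := (w^T *m Y *m w) 0 0.
have := spd_mx_psd Yspd (u + (- b / c) *: w); rewrite qform_expand // -/a -/b -/c.
have E : a * c - b ^+ 2 = c * (a + 2 * (- b / c) * b + (- b / c) ^+ 2 * c).
  by field; rewrite gt_eqF.
by move=> q0; rewrite -subr_ge0 E mulr_ge0 // ltW.
Qed.

Lemma qform_le_sum_abs W v :
  (v^T *m W *m v) 0 0 <= (\sum_i \sum_k `|W i k|) * (v^T *m v) 0 0.
Proof.
have sqr_le i : v i 0 ^+ 2 <= (v^T *m v) 0 0.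
  by rewrite sqnormE (bigD1 i) //= lerDl sumr_ge0 // => j _; exact: sqr_ge0.
rewrite qformE mulr_suml; apply: ler_sum => i _; rewrite mulr_suml.
apply: ler_sum => k _.
have vik : `|v i 0 * v k 0| <= (v^T *m v) 0 0.
  have := sqr_le i; have := sqr_le k.
  have := sqr_ge0 (v i 0 - v k 0); have := sqr_ge0 (v i 0 + v k 0).
  by rewrite ler_norml; nra.
rewrite [_ * _ * _](_ : _ = W i k * (v i 0 * v k 0)); last by ring.
by rewrite (le_trans (ler_norm _)) // normrM ler_wpM2l.
Qed.

(* With W = Y^-1, Cauchy-Schwarz for the form of Y gives
   |v|^4 = (v^T Y (W v))^2 <= (v^T Y v) (v^T W v) <= (v^T Y v) (sum |W i k|) |v|^2. *)
Lemma spd_mx_coercive Y : spd_mx Y -> Y \in unitmx ->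
  exists2 lam : R, 0 < lam & coercive_mx lam Y.
Proof.
move=> Yspd Yunit; have Ysym := Yspd.1.
set W := invmx Y; set K := \sum_i \sum_k `|W i k|.
have K0 : 0 <= K by apply: sumr_ge0 => i _; exact: sumr_ge0.
exists (K + 1)^-1; first by rewrite invr_gt0 ltr_pwDr.
move=> v; have := qform_cauchy_schwarz v (W *m v) Yspd.
have -> : v^T *m Y *m (W *m v) = v^T *m v.
  by rewrite !mulmxA -[v^T *m Y *m W]mulmxA mulmxV // mulmx1.
have -> : (W *m v)^T *m Y *m (W *m v) = v^T *m W *m v.
  by rewrite trmx_mul trmx_inv Ysym -!mulmxA [Y *m (W *m v)]mulmxA mulmxV // mul1mx.
have := qform_le_sum_abs W v; rewrite -/K.
have := spd_mx_psd Yspd v; have := sqnorm_ge0 v.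
set a := (v^T *m v) 0 0; set q := (v^T *m Y *m v) 0 0 => a0 q0 Wv CS.
rewrite mulrC ler_pdivrMr ?ltr_pwDr //.
have [-> | a_neq0] := eqVneq a 0; first by rewrite mulr_ge0 ?addr_ge0.
have a_gt0 : 0 < a by rewrite lt_def a_neq0.
have : a ^+ 2 <= q * (K * a) by apply: (le_trans CS); apply: ler_wpM2l.
nra.
Qed.

End QuadraticForm.

Section LinearRate.
Variables (R : realType) (P : set R).

Definition is_O_s (V : normedModType R) (f : R -> V) :=
  exists C : R, forall s, P s -> `|f s| <= C * `|s|.

Definition bounded_on (V : normedModType R) (f : R -> V) :=
  exists M : R, forall s, P s -> `|f s| <= M.

Lemma is_O_s_le (U V : normedModType R) (f : R -> U) (g : R -> V) (k : R) :
  (forall s, P s -> `|f s| <= k * `|g s|) -> is_O_s g -> is_O_s f.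
Proof.
move=> fg [C gC]; exists (`|k| * C) => s Ps.
rewrite (le_trans (fg s Ps)) // -mulrA.
by rewrite (le_trans (ler_wpM2r _ (ler_norm k))) ?ler_wpM2l ?gC.
Qed.

Lemma eq_is_O_s (V : normedModType R) (f g : R -> V) :
  (forall s, P s -> f s = g s) -> is_O_s g -> is_O_s f.
Proof. by move=> fg; apply: (is_O_s_le (k := 1)) => s Ps; rewrite fg // mul1r. Qed.

Lemma is_O_sD (V : normedModType R) (f g : R -> V) :
  is_O_s f -> is_O_s g -> is_O_s (fun s => f s + g s).
Proof.
move=> [C fC] [C' gC']; exists (C + C') => s Ps.
by rewrite mulrDl (le_trans (ler_normD _ _)) // lerD ?fC ?gC'.
Qed.

Lemma is_O_sN (V : normedModType R) (f : R -> V) :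
  is_O_s f -> is_O_s (fun s => - f s).
Proof. by move=> [C fC]; exists C => s Ps; rewrite normrN fC. Qed.

Lemma is_O_sZ (V : normedModType R) (f : R -> V) :
  bounded_on f -> is_O_s (fun s => s *: f s).
Proof. by move=> [M fM]; exists M => s Ps; rewrite normrZ mulrC ler_wpM2r ?fM. Qed.

Lemma bounded_on_cst (V : normedModType R) (x : V) : bounded_on (fun=> x).
Proof. by exists `|x|. Qed.

Lemma bounded_onD (V : normedModType R) (f g : R -> V) :
  bounded_on f -> bounded_on g -> bounded_on (fun s => f s + g s).
Proof.
move=> [M fM] [M' gM']; exists (M + M') => s Ps.
by rewrite (le_trans (ler_normD _ _)) // lerD ?fM ?gM'.
Qed.

Lemma is_O_s_bounded_on (V : normedModType R) (f : R -> V) (r : R) :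
  (forall s, P s -> `|s| <= r) -> is_O_s f -> bounded_on f.
Proof.
move=> Pr [C fC]; exists (`|C| * r) => s Ps.
rewrite (le_trans (fC s Ps)) // (le_trans (ler_wpM2r _ (ler_norm C))) //.
by rewrite ler_wpM2l ?Pr.
Qed.

Lemma is_O_s_mulmxl m n p (f : R -> 'M[R]_(m, n)) (g : R -> 'M[R]_(n, p)) :
  bounded_on f -> is_O_s g -> is_O_s (fun s => f s *m g s).
Proof.
move=> [M fM] [C gC]; exists (n%:R * M * C) => s Ps.
have M0 : 0 <= M by rewrite (le_trans _ (fM s Ps)).
rewrite (le_trans (mx_norm_mul _ _)) // -!mulrA ler_wpM2l //.
by apply: ler_pM => //; [exact: fM | exact: gC].
Qed.

Lemma is_O_s_mulmxr m n p (f : R -> 'M[R]_(m, n)) (g : R -> 'M[R]_(n, p)) :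
  is_O_s f -> bounded_on g -> is_O_s (fun s => f s *m g s).
Proof.
move=> [C fC] [M gM]; exists (n%:R * M * C) => s Ps.
have M0 : 0 <= M by rewrite (le_trans _ (gM s Ps)).
rewrite (le_trans (mx_norm_mul _ _)) // -!mulrA ler_wpM2l //.
by rewrite (le_trans (ler_pM _ _ (fC s Ps) (gM s Ps))) // mulrC.
Qed.

Lemma is_O_s_cvg (V : normedModType R) (f : R -> V) (l : V) :
  is_O_s (fun s => f s - l) -> f @ within P (nbhs (0 : R)) --> l.
Proof.
move=> [C fC]; apply/cvgrPdist_le => e e0.
have C1 : 0 < `|C| + 1 by rewrite ltr_pwDr.
rewrite near_withinE; near=> s => Ps.
rewrite distrC (le_trans (fC s Ps)) //.
rewrite (@le_trans _ _ ((`|C| + 1) * `|s|)) //.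
  by rewrite ler_wpM2r // (le_trans (ler_norm C)) // lerDl.
rewrite -ler_pdivlMl //; near: s.
by apply: (@nbhs0_le R R^o); rewrite mulr_gt0 ?invr_gt0.
Unshelve. all: by end_near. Qed.

End LinearRate.

Section Window.
Variable R : realType.

Definition window (a b t : R) : set R := [set s | s != 0 /\ a <= t + s <= b].

Definition diff_quot (V : normedModType R) (f : R -> V) (t s : R) : V :=
  s^-1 *: (f (t + s) - f t).

Lemma window_norm_le a b t :
  a <= t <= b -> forall s, window a b t s -> `|s| <= b - a.
Proof.
move=> /andP[? ?] s [_ /andP[? ?]].
by rewrite ler_norml; apply/andP; split; lra.
Qed.

Lemma is_deriv_within_of_O_s (V : normedModType R) a b (f : R -> V) t df :
  is_O_s (window a b t) (fun s => diff_quot f t s - df) ->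
  is_deriv_within a b f t df.
Proof. exact: is_O_s_cvg. Qed.

Lemma is_O_s_incr (V : normedModType R) a b (f : R -> V) t df :
  a <= t <= b -> is_O_s (window a b t) (fun s => diff_quot f t s - df) ->
  is_O_s (window a b t) (fun s => f (t + s) - f t).
Proof.
move=> ht fdf.
apply: (eq_is_O_s (g := fun s => s *: (diff_quot f t s - df + df))).
  by move=> s [s0 _]; rewrite subrK /diff_quot scalerA divff // scale1r.
apply/is_O_sZ/bounded_onD; last exact: bounded_on_cst.
exact: is_O_s_bounded_on (window_norm_le ht) fdf.
Qed.

End Window.

Section SquareRootPath.
Variables (R : realType) (n : nat) (a b t : R) (Y : R -> 'M[R]_n) (P1 P2 D : 'M[R]_n).
Hypotheses (ht : a <= t <= b) (Yspd : forall u, a <= u <= b -> spd_mx (Y u))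
  (Yt_unit : Y t \in unitmx)
  (Ysqr : forall s, window a b t s ->
     Y (t + s) *m Y (t + s) - Y t *m Y t = s *: P1 + s ^+ 2 *: P2)
  (YD : Y t *m D + D *m Y t = P1).

Lemma sylvester_is_O_s (F G : R -> 'M[R]_n) :
  (forall s, window a b t s -> Y (t + s) *m F s + F s *m Y t = G s) ->
  is_O_s (window a b t) G -> is_O_s (window a b t) F.
Proof.
move=> FG; have [lam lam0 Ylam] := spd_mx_coercive (Yspd ht) Yt_unit.
apply: (is_O_s_le (k := n%:R / lam)) => s Ps.
apply: (sylvester_mx_norm lam0 (Yspd ht).1 Ylam _ (FG s Ps)).
exact/spd_mx_psd/Yspd/Ps.2.
Qed.

Lemma sqrt_path_incr : is_O_s (window a b t) (fun s => Y (t + s) - Y t).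
Proof.
apply: (sylvester_is_O_s (G := fun s => s *: P1 + s *: (s *: P2))).
  by move=> s Ps; rewrite mulmxBr mulmxBl addrA subrK Ysqr // scalerA -expr2.
apply: is_O_sD; apply: is_O_sZ; first exact: bounded_on_cst.
exists ((b - a) * `|P2|) => s Ps.
by rewrite normrZ ler_wpM2r // (window_norm_le ht).
Qed.

Lemma sqrt_path_deriv : is_O_s (window a b t) (fun s => diff_quot Y t s - D).
Proof.
apply: (sylvester_is_O_s (G := fun s => s *: P2 - (Y (t + s) - Y t) *m D)).
  move=> s Ps; have [s0 _] := Ps; set X := Y (t + s) - Y t.
  have YX : Y (t + s) *m X + X *m Y t = s *: P1 + s ^+ 2 *: P2.
    by rewrite mulmxBr mulmxBl addrA subrK Ysqr.
  have Y1D : Y (t + s) *m D + D *m Y t = X *m D + P1.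
    by rewrite -YD mulmxBl addrA subrK.
  rewrite /diff_quot -/X mulmxBr mulmxBl -scalemxAr -scalemxAl addrACA -opprD.
  rewrite -scalerDr YX Y1D scalerDr !scalerA mulVf // expr2 mulKf //.
  by apply/matrixP => i j; rewrite !mxE; ring.
apply: is_O_sD; first exact/is_O_sZ/bounded_on_cst.
by apply/is_O_sN/is_O_s_mulmxr; [exact: sqrt_path_incr | exact: bounded_on_cst].
Qed.

End SquareRootPath.

Section OrthogonalFactor.
Variables (R : realType) (n : nat) (a b t : R) (A Q Y : R -> 'M[R]_n) (Ad D : 'M[R]_n).
Hypotheses (ht : a <= t <= b)
  (Aaff : forall s, window a b t s -> A (t + s) = A t + s *: Ad)
  (AQY : forall u, a <= u <= b -> A u = Q u *m Y u /\ orthogonal_mx (Q u))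
  (Yt_unit : Y t \in unitmx)
  (YD : is_O_s (window a b t) (fun s => diff_quot Y t s - D)).

Lemma orth_factor_bounded : bounded_on (window a b t) (fun s => Q (t + s)).
Proof. by exists 1 => s [_ /AQY[_ /orthogonal_mx_norm_le1]]. Qed.

Lemma orth_factor_incrE s : window a b t s ->
  Q (t + s) - Q t = (s *: Ad - Q (t + s) *m (Y (t + s) - Y t)) *m invmx (Y t).
Proof.
move=> Ps; have [_ /AQY[AQY1 _]] := Ps; have [AQY0 _] := AQY ht.
rewrite -[LHS](mulmxK Yt_unit); congr (_ *m _).
rewrite mulmxBl mulmxBr -AQY1 -AQY0 Aaff //.
by apply/matrixP => i j; rewrite !mxE; ring.
Qed.

Lemma orth_factor_incr : is_O_s (window a b t) (fun s => Q (t + s) - Q t).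
Proof.
apply: (eq_is_O_s orth_factor_incrE); apply/is_O_s_mulmxr/bounded_on_cst.
apply: is_O_sD; first exact/is_O_sZ/bounded_on_cst.
apply/is_O_sN/is_O_s_mulmxl; first exact: orth_factor_bounded.
exact: is_O_s_incr ht YD.
Qed.

Lemma orth_factor_deriv : is_O_s (window a b t)
  (fun s => diff_quot Q t s - (Ad - Q t *m D) *m invmx (Y t)).
Proof.
apply: (eq_is_O_s (g := fun s => - (((Q (t + s) - Q t) *m D
    + Q (t + s) *m (diff_quot Y t s - D)) *m invmx (Y t)))).
  move=> s Ps; have [s0 _] := Ps.
  rewrite [in LHS]/diff_quot [in LHS](orth_factor_incrE Ps) scalemxAl scalerBr.
  rewrite scalerA mulVf // scale1r scalemxAr -mulmxBl -[RHS]mulNmx; congr (_ *m _).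
  rewrite !mulmxBr mulmxBl.
  by apply/matrixP => i j; rewrite !mxE; ring.
apply/is_O_sN/is_O_s_mulmxr/bounded_on_cst.
apply: is_O_sD; first exact/is_O_s_mulmxr/bounded_on_cst/orth_factor_incr.
by apply: is_O_s_mulmxl YD; exact: orth_factor_bounded.
Qed.

End OrthogonalFactor.

Section MatrixAlgebra.
Variables (R : realType) (n : nat).
Implicit Types K Y : 'M[R]_n.

Lemma sym_mx_add_skew K : sym_mx K + skew_mx K = K.
Proof. by apply/matrixP => i j; rewrite !mxE; field. Qed.

Lemma comm_mx_trmx K Y : Y^T = Y -> comm_mx K Y -> comm_mx K^T Y.
Proof. by move=> Ysym KY; rewrite /comm_mx -Ysym -!trmx_mul KY. Qed.

Lemma comm_mx_sym_mx K Y : Y^T = Y -> comm_mx K Y -> comm_mx (sym_mx K) Y.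
Proof.
move=> Ysym KY; rewrite /comm_mx -scalemxAl -scalemxAr mulmxDl mulmxDr.
by rewrite KY (comm_mx_trmx Ysym KY).
Qed.

Lemma comm_mx_skew_mx K Y : Y^T = Y -> comm_mx K Y -> comm_mx (skew_mx K) Y.
Proof.
move=> Ysym KY; rewrite /comm_mx -scalemxAl -scalemxAr mulmxBl mulmxBr.
by rewrite KY (comm_mx_trmx Ysym KY).
Qed.

Lemma sylvester_sym_mx K Y : Y^T = Y -> comm_mx K Y ->
  Y *m (Y *m sym_mx K) + (Y *m sym_mx K) *m Y = Y *m Y *m K + (Y *m Y *m K)^T.
Proof.
move=> Ysym KY.
have KtYY : comm_mx K^T (Y *m Y) by apply: comm_mxM; apply: comm_mx_trmx.
rewrite -[_ *m Y]mulmxA (comm_mx_sym_mx Ysym KY) -mulmxDr -mulmxDr.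
have -> : sym_mx K + sym_mx K = K + K^T.
  by apply/matrixP => i j; rewrite !mxE; field.
by rewrite !trmx_mul Ysym !mulmxDr !mulmxA -[K^T *m Y *m Y]mulmxA KtYY.
Qed.

Lemma gram_affine_sub (A0 Ad : 'M[R]_n) (s : R) :
  (A0 + s *: Ad)^T *m (A0 + s *: Ad) - A0^T *m A0
  = s *: (A0^T *m Ad + Ad^T *m A0) + s ^+ 2 *: (Ad^T *m Ad).
Proof.
have -> : (A0 + s *: Ad)^T = A0^T + s *: Ad^T by rewrite linearD linearZ.
rewrite mulmxDl !mulmxDr -!scalemxAl -!scalemxAr.
by apply/matrixP => i j; rewrite !mxE; ring.
Qed.

End MatrixAlgebra.

Lemma polar_affine_deriv (R : realType) (n : nat) (a b t : R)
    (A Q Y : R -> 'M[R]_n) (Ad : 'M[R]_n) :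
  a <= t <= b -> (forall s, window a b t s -> A (t + s) = A t + s *: Ad) ->
  A t \in unitmx ->
  (forall u, a <= u <= b ->
     A u = Q u *m Y u /\ orthogonal_mx (Q u) /\ spd_mx (Y u)) ->
  comm_mx (invmx (A t) *m Ad) ((A t)^T *m A t) ->
  is_deriv_within a b Y t (Y t *m sym_mx (invmx (A t) *m Ad)) /\
  is_deriv_within a b Q t (Q t *m skew_mx (invmx (A t) *m Ad)).
Proof.
move=> ht Aaff At_unit polar KAA; set K := invmx (A t) *m Ad in KAA *.
have gram u : a <= u <= b -> (A u)^T *m A u = Y u *m Y u.
  move=> /polar[-> [QQ [Ysym _]]].
  by rewrite trmx_mul -mulmxA (mulmxA (Q _)^T) QQ mul1mx Ysym.
have Yspd u : a <= u <= b -> spd_mx (Y u) by move=> /polar[_ []].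
have [At _] := polar t ht; have Ysym := (Yspd t ht).1.
have Yt_unit : Y t \in unitmx.
  by move: At_unit; rewrite At !unitmxE det_mulmx unitrM => /andP[].
have [lam lam0 Ylam] := spd_mx_coercive (Yspd t ht) Yt_unit.
have KY : comm_mx K (Y t).
  by apply: comm_mx_of_comm_sqr lam0 Ysym Ylam _; rewrite -gram.
have AK : A t *m K = Ad by rewrite mulKVmx.
have YD : Y t *m (Y t *m sym_mx K) + (Y t *m sym_mx K) *m Y t
          = (A t)^T *m Ad + Ad^T *m A t.
  by rewrite sylvester_sym_mx // -gram // -mulmxA AK trmx_mul trmxK.
have Ysqr s : window a b t s -> Y (t + s) *m Y (t + s) - Y t *m Y t
    = s *: ((A t)^T *m Ad + Ad^T *m A t) + s ^+ 2 *: (Ad^T *m Ad).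
  by move=> Ps; have [_ hs] := Ps; rewrite -!gram // Aaff // gram_affine_sub.
have YdO := sqrt_path_deriv ht Yspd Yt_unit Ysqr YD.
split; apply: is_deriv_within_of_O_s => //.
have AQY u : a <= u <= b -> A u = Q u *m Y u /\ orthogonal_mx (Q u).
  by move=> /polar[? []].
apply: eq_is_O_s (orth_factor_deriv ht Aaff AQY Yt_unit YdO) => s _.
congr (_ - _); apply: (canRL (mulmxK Yt_unit)).
rewrite -AK At -mulmxA -!mulmxBr.
have -> : K - sym_mx K = skew_mx K.
  by rewrite -{1}(sym_mx_add_skew K) addrAC subrr add0r.
by rewrite -mulmxA (comm_mx_skew_mx Ysym KY).
Qed.

Section RotationChord.
Variables (R : realType) (n : nat).
Implicit Types X V M Md : 'M[R]_n.

Lemma orthogonal_mx_trmx X : orthogonal_mx X -> orthogonal_mx X^T.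
Proof. by move=> XX; rewrite /orthogonal_mx trmxK; apply: mulmx1C. Qed.

Lemma trmx_chord X V (x v : R) :
  (x *: X + v *: V)^T = x *: X^T + v *: V^T.
Proof. by apply/matrixP => i j; rewrite !mxE. Qed.

Lemma gram_chord X V (x v : R) : orthogonal_mx X -> orthogonal_mx V ->
  (x *: X + v *: V)^T *m (x *: X + v *: V)
  = (x ^+ 2 + v ^+ 2) *: 1%:M + (x * v) *: (X^T *m V + V^T *m X).
Proof.
move=> XX VV; rewrite trmx_chord mulmxDl !mulmxDr.
rewrite -!scalemxAl -!scalemxAr !scalerA XX VV.
by apply/matrixP => i j; rewrite !mxE; ring.
Qed.

(* Both sides reduce to V X^T V - X V^T X + X - V. *)
Lemma chord_cross_comm X V : orthogonal_mx X -> orthogonal_mx V ->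
  (V - X) *m (X^T *m V + V^T *m X) = (X *m V^T + V *m X^T) *m (V - X).
Proof.
move=> XX VV; have XXt := mulmx1C XX; have VVt := mulmx1C VV.
rewrite !(mulmxBl, mulmxBr, mulmxDl, mulmxDr) !mulmxA XXt VVt.
rewrite -[X *m V^T *m V]mulmxA VV -[V *m X^T *m X]mulmxA XX !mul1mx !mulmx1.
by apply/matrixP => i j; rewrite !mxE; ring.
Qed.

Lemma chord_comm_gram X V (x v : R) : orthogonal_mx X -> orthogonal_mx V ->
  (V - X) *m ((x *: X + v *: V)^T *m (x *: X + v *: V))
  = ((x *: X + v *: V) *m (x *: X + v *: V)^T) *m (V - X).
Proof.
move=> XX VV.
have -> : (x *: X + v *: V) *m (x *: X + v *: V)^T
    = (x ^+ 2 + v ^+ 2) *: 1%:M + (x * v) *: (X *m V^T + V *m X^T).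
  have := gram_chord x v (orthogonal_mx_trmx XX) (orthogonal_mx_trmx VV).
  by rewrite !trmxK -trmx_chord trmxK.
rewrite gram_chord // [LHS]mulmxDr [RHS]mulmxDl -!scalemxAr -!scalemxAl.
by rewrite mulmx1 mul1mx chord_cross_comm.
Qed.

Lemma comm_mx_invmx_gram M Md : M \in unitmx ->
  Md *m (M^T *m M) = (M *m M^T) *m Md -> comm_mx (invmx M *m Md) (M^T *m M).
Proof.
move=> Munit MdMM.
by rewrite /comm_mx -mulmxA MdMM -!mulmxA mulKmx // mulKVmx.
Qed.

Lemma derive1_chord (h : R) (X V : 'M[R]_n) (t : R) : 0 < h ->
  derive1 (fun t : R => ((h - t) / h) *: X + (t / h) *: V) t = h^-1 *: (V - X).
Proof.
move=> h0; rewrite derive1E /derive; apply: cvg_lim => //.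
apply: cvg_near_cst; near=> e.
have e0 : e != 0 by near: e; exact: nbhs_dnbhs_neq.
rewrite scaler1; apply/matrixP => i j; rewrite !mxE /shift /=.
by field; rewrite e0 gt_eqF.
Unshelve. all: by end_near. Qed.

End RotationChord.

Theorem lemma3p1 (R : realType) (n : nat) (R0 R1 : 'M[R]_n) (h : R)
  (Q Y : R -> 'M[R]_n) :
  (0 < n)%N -> SOmx R0 -> SOmx R1 -> 0 < h ->
  let A : R -> 'M[R]_n := fun t : R => ((h - t) / h) *: R0 + (t / h) *: R1 in
  (forall t, 0 <= t <= h -> A t \in unitmx) ->
  (forall t, 0 <= t <= h ->
     A t = Q t *m Y t /\ orthogonal_mx (Q t) /\ spd_mx (Y t)) ->
  forall t, 0 <= t <= h ->
    is_deriv_within 0 h Y t (Y t *m sym_mx (invmx (A t) *m derive1 A t)) /\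
    is_deriv_within 0 h Q t (Q t *m skew_mx (invmx (A t) *m derive1 A t)).
Proof.
move=> _ [R0o _] [R1o _] h0 A A_unit polar t ht.
rewrite /A derive1_chord // -/A.
apply: (polar_affine_deriv ht _ (A_unit t ht) polar).
  move=> s _; apply/matrixP => i j; rewrite !mxE.
  by field; rewrite gt_eqF.
apply: comm_mx_invmx_gram; first exact: A_unit.
by rewrite -scalemxAl -scalemxAr chord_comm_gram.
Qed.
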